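(* Let $n\ge2$ and let $A=T_n\langle S;T\rangle$ be a Boolean Toeplitz matrix with $S=\{s_1<\dots<s_{k_1}\}$, $T=\{t_1<\dots<t_{k_2}\}$ nonempty subsets of $\{1,\dots,n-1\}$, $\max S+\min T\le n$ and $\min S+\max T\le n$. Let $d=\gcd\{s+t: s\in S, t\in T\}$ and $d'=\gcd(d,s_1)$. Then (a) the matrix period of $A$ is $d/d'$; (b) the competition period of $A$ is $1$; (c) there is a permutation matrix $P$ such that, as $m\to\infty$, $P\,(A^m(A^T)^m)\,P^T$ converges to (i.e. is eventually equal to) the block diagonal matrix $\mathrm{diag}(J_{m_1},\dots,J_{m_d})$, where $J_{m_i}$ is the all-ones matrix of order $m_i=|\{v\in[n] : v\equiv i\pmod d\}|$.
   Context: Boolean arithmetic on $\{0,1\}$: $1+1=1$. $T_n\langle S;T\rangle$ is the $n\times n$ $(0,1)$-matrix whose $(i,j)$-entry is $1$ iff $j-i\in S$ or $i-j\in T$. The matrix period of $A$ is the smallest $p\ge1$ with $A^m=A^{m+p}$ for all sufficiently large $m$. The competition index $q$ of $A$ is the smallest positive integer such that $A^{q+i}(A^T)^{q+i}=A^{q+r+i}(A^T)^{q+r+i}$ for some $r\ge1$ and all $i\ge0$; the competition period is the smallest $p\ge1$ with $A^q(A^T)^q=A^{q+p}(A^T)^{q+p}$. *)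

From mathcomp Require Import all_boot all_order all_algebra all_fingroup.
Set Implicit Arguments. Unset Strict Implicit. Unset Printing Implicit Defensive.

(* Boolean (0,1)-matrices as 'M[bool]_n, with Boolean arithmetic 1+1=1. *)
Definition bmul n (A B : 'M[bool]_n) : 'M[bool]_n :=
  \matrix_(i, j) [exists k, A i k && B k j].

Definition bid n : 'M[bool]_n := \matrix_(i, j) (i == j).

Definition bpow n (A : 'M[bool]_n) (m : nat) : 'M[bool]_n := iter m (bmul A) (bid n).

(* T_n<S;T>: (i,j) entry is 1 iff j - i \in S or i - j \in T.
   Indices are 0-based ordinals; S, T are sets of elements of {0..n-1}. *)
Definition toeplitz n (S T : {set 'I_n}) : 'M[bool]_n :=
  \matrix_(i, j) ([exists s in S, (i + s == j)%N] || [exists t in T, (j + t == i)%N]).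

Definition eventually_periodic n (A : 'M[bool]_n) (p : nat) : Prop :=
  exists M, forall m, M <= m -> bpow A m = bpow A (m + p).

Definition is_matrix_period n (A : 'M[bool]_n) (p : nat) : Prop :=
  0 < p /\ eventually_periodic A p /\
  forall p', 0 < p' -> eventually_periodic A p' -> p <= p'.

Definition compm n (A : 'M[bool]_n) (m : nat) : 'M[bool]_n :=
  bmul (bpow A m) (bpow A^T m).

Definition comp_index_prop n (A : 'M[bool]_n) (q : nat) : Prop :=
  exists2 r, 0 < r & forall i, compm A (q + i) = compm A (q + r + i).

Definition is_competition_index n (A : 'M[bool]_n) (q : nat) : Prop :=
  0 < q /\ comp_index_prop A q /\
  forall q', 0 < q' -> comp_index_prop A q' -> q <= q'.

Definition is_competition_period n (A : 'M[bool]_n) (p : nat) : Prop :=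
  exists q, is_competition_index A q /\
    [/\ 0 < p, compm A q = compm A (q + p) &
        forall p', 0 < p' -> compm A q = compm A (q + p') -> p <= p'].

(* Block diagonal (0,1)-matrix diag(J_{ms_1}, ..., J_{ms_k}) of order n
   (blocks occupy consecutive index ranges). *)
Definition blockdiag_ones n (ms : seq nat) : 'M[bool]_n :=
  \matrix_(i, j) has (fun k => let a := sumn (take k ms) in
                               let b := a + nth 0 ms k in
                               (a <= i < b) && (a <= j < b)) (iota 0 (size ms)).

Definition bperm_mx n (s : 'S_n) : 'M[bool]_n := \matrix_(i, j) (s i == j).

Definition class_sizes (n d : nat) : seq nat :=
  [seq count (fun v => v %% d == i %% d) (iota 1 n) | i <- iota 1 d].

(* For large m, A^m has a 1 in position (i, j) exactly when j = i + m a (mod d), where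
   a = min S and b = min T.  Only if: d divides s + b, a + b and a + t, so every step +s or
   -t of a walk is congruent to +a.  If: the two hypotheses on max and min say that from any
   vertex one of the steps +a, -b is available, that a step +s can be taken after descending
   with steps -b, and a step -t after climbing with steps +a.  A Bezout argument modulo a + b
   realises the residue of j - i + m b by a bounded prefix using the other steps, and the
   remaining walk uses +a and -b only.  Hence the matrix period is the least p with d | p a,
   that is d / gcd(d, a).  The same description of (A^T)^m with b gives, since d | a + b,
   A^m (A^T)^m = [i = j (mod d)] for large m: a constant limit, so the competition period is 1,
   and sorting the indices by residue turns it into the block diagonal matrix. *)

From mathcomp Require Import all_boot all_order all_algebra all_fingroup.
From mathcomp Require Import zify ring.
Set Implicit Arguments. Unset Strict Implicit. Unset Printing Implicit Defensive.
Import Order.TTheory GRing.Theory.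

Lemma bpow0E n (A : 'M[bool]_n) i j : bpow A 0 i j = (i == j).
Proof. by rewrite /bpow /= /bid mxE. Qed.

Lemma bpowSE n (A : 'M[bool]_n) m i j :
  bpow A m.+1 i j = [exists k, A i k && bpow A m k j].
Proof. by rewrite /bpow iterS /bmul mxE. Qed.

Lemma bpow_trans n (A : 'M[bool]_n) m1 m2 i j k :
  bpow A m1 i j -> bpow A m2 j k -> bpow A (m1 + m2) i k.
Proof.
elim: m1 i => [|m1 IH] i; first by rewrite bpow0E => /eqP ->.
rewrite bpowSE addSn bpowSE => /existsP [l /andP [Ail Alj]] Ajk.
by apply/existsP; exists l; rewrite Ail IH.
Qed.

Lemma bmul_bperm_mx n (s : 'S_n) (X : 'M[bool]_n) i j :
  bmul (bperm_mx s) (bmul X (bperm_mx s)^T%R) i j = X (s i) (s j).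
Proof.
rewrite !mxE; apply/existsP/idP => [[k]|Xij].
  rewrite !mxE => /andP [/eqP <-] /existsP [l]; rewrite !mxE => /andP [Xil /eqP ->].
  exact: Xil.
exists (s i); rewrite !mxE eqxx /=; apply/existsP; exists (s j).
by rewrite !mxE Xij eqxx.
Qed.

Lemma trmx_toeplitz n (S T : {set 'I_n}) : (toeplitz S T)^T%R = toeplitz T S.
Proof. by apply/matrixP => i j; rewrite !mxE orbC. Qed.

Definition gcd_sum n (S T : {set 'I_n}) :=
  \big[gcdn/0]_(s in S) \big[gcdn/0]_(t in T) (val s + val t).

Lemma dvdn_gcd_sum n (S T : {set 'I_n}) s t :
  s \in S -> t \in T -> gcd_sum S T %| s + t.
Proof.
by move=> sS tT; rewrite (biggcdn_inf s) // (biggcdn_inf t).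
Qed.

Lemma gcd_sumC n (S T : {set 'I_n}) : gcd_sum S T = gcd_sum T S.
Proof.
rewrite /gcd_sum exchange_big /=.
by apply: eq_bigr => t _; apply: eq_bigr => s _; rewrite addnC.
Qed.

Lemma eqn_mod_dvdz d u v : (u == v %[mod d]) = (d%:Z %| (v%:Z - u%:Z)%R)%Z.
Proof. by rewrite -eqz_mod_dvd /= !modz_nat eqz_nat eq_sym. Qed.

Lemma bpow_toeplitz_mod n (S T : {set 'I_n}) (a b : 'I_n) m i j :
  a \in S -> b \in T -> bpow (toeplitz S T) m i j ->
  i + m * a == j %[mod gcd_sum S T].
Proof.
move=> aS bT; rewrite eqn_mod_dvdz; elim: m i => [|m IH] i.
  by rewrite bpow0E => /eqP ->; rewrite addn0 subrr dvdz0.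
rewrite bpowSE => /existsP [k /andP [Aik /IH dvd_kj]].
have dvd_ik : ((gcd_sum S T)%:Z %| (k%:Z - (i + a)%N%:Z)%R)%Z.
  move: Aik; rewrite mxE => /orP [] /existsP [u /andP [uST /eqP Eu]].
    have -> : (k%:Z - (i + a)%N%:Z = (u + b)%N%:Z - (a + b)%N%:Z)%R by lia.
    by rewrite rpredB // dvdzE dvdn_gcd_sum.
  have -> : (k%:Z - (i + a)%N%:Z = - (a + u)%N%:Z)%R by lia.
  by rewrite rpredN dvdzE dvdn_gcd_sum.
have -> : (j%:Z - (i + m.+1 * a)%N%:Z =
          j%:Z - (k + m * a)%N%:Z + (k%:Z - (i + a)%N%:Z))%R by rewrite mulSn; lia.
exact: rpredD.
Qed.

Lemma dvdz_big_gcdz (X : eqType) (F : X -> int) (N : int) (l : seq X) z :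
  z \in l -> (\big[gcdz/N]_(y <- l) F y %| F z)%Z.
Proof.
elim: l => // y l IH; rewrite in_cons big_cons => /orP [/eqP ->|/IH].
  exact: dvdz_gcdl.
exact: dvdz_trans (dvdz_gcdr _ _).
Qed.

Lemma bezout_mod_seq (X : eqType) (c : X -> int) (N : nat) (gl : seq X) (r : int) :
  0 < N -> (\big[gcdz/N%:Z]_(g <- gl) c g %| r)%Z ->
  exists L : seq X, [/\ {subset L <= gl}, size L <= N * size gl &
                       (N%:Z %| (\sum_(g <- L) c g - r)%R)%Z].
Proof.
move=> N_gt0; elim: gl r => [|g gl IH] r.
  by rewrite big_nil => dvd_r; exists [::]; rewrite big_nil sub0r rpredN.
rewrite big_cons; set h := \big[gcdz/_]_(g' <- gl) c g'.
have [u [v Euv]] := Bezoutz (c g) h.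
case/dvdzP => k ->.
have [L0 [sub_L0 size_L0 dvd_L0]] := IH (k * v * h)%R (dvdz_mull _ (dvdzz _)).
have N0 : (N%:Z != 0)%Z by rewrite eqz_nat -lt0n.
pose e := `|(k * u %% N%:Z)%Z|%N.
have Ee : (e%:Z = k * u %% N%:Z)%Z by rewrite gez0_abs // modz_ge0.
have e_lt : e < N by rewrite -ltz_nat Ee ltz_pmod.
have dvd_e : (N%:Z %| (e%:Z - k * u)%R)%Z by rewrite Ee -eqz_mod_dvd modz_mod.
exists (nseq e g ++ L0); split.
- by move=> x; rewrite mem_cat in_cons => /orP [/nseqP [-> _]|/sub_L0 ->]; rewrite ?eqxx ?orbT.
- by rewrite size_cat size_nseq mulnS leq_add // ltnW.
rewrite big_cat big_nseq iter_addr_0 -Euv.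
have -> : (c g *+ e + \sum_(g' <- L0) c g' - k * (u * c g + v * h) =
           (e%:Z - k * u) * c g + (\sum_(g' <- L0) c g' - k * v * h))%R.
  by rewrite -mulr_natr natz; ring.
by rewrite rpredD // dvdz_mulr.
Qed.

Section Walks.

Variables (n : nat) (S T : {set 'I_n.+1}).

Definition walk m x y := bpow (toeplitz S T) m (inord x) (inord y).

Lemma walk_nil x : walk 0 x x.
Proof. by rewrite /walk bpow0E. Qed.

Lemma walk_cat m1 m2 x y z : walk m1 x y -> walk m2 y z -> walk (m1 + m2) x z.
Proof. exact: bpow_trans. Qed.

Lemma walk_consS (s : 'I_n.+1) m x y :
  s \in S -> x + s <= n -> walk m (x + s) y -> walk m.+1 x y.
Proof.
move=> sS le_xs w; rewrite /walk bpowSE; apply/existsP; exists (inord (x + s)).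
apply/andP; split; last exact: w.
rewrite mxE; apply/orP; left; apply/existsP; exists s.
rewrite sS !inordK //; lia.
Qed.

Lemma walk_consT (t : 'I_n.+1) m x y :
  t \in T -> t <= x <= n -> walk m (x - t) y -> walk m.+1 x y.
Proof.
move=> tT /andP [le_tx le_xn] w; rewrite /walk bpowSE; apply/existsP.
exists (inord (x - t)); apply/andP; split; last exact: w.
rewrite mxE; apply/orP; right; apply/existsP; exists t; rewrite tT !inordK //; lia.
Qed.

Variables (a b : 'I_n.+1).
Hypotheses (aS : a \in S) (bT : b \in T) (a_gt0 : 0 < a) (b_gt0 : 0 < b).
Hypothesis S_add_b : forall s, s \in S -> s + b <= n.+1.
Hypothesis a_add_T : forall t, t \in T -> a + t <= n.+1.

(* Since a + b <= n + 1, from every vertex one of the steps +a, -b stays in range. *)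
Lemma walk_ab p q x y :
  x <= n -> y <= n -> x + p * a = y + q * b -> walk (p + q) x y.
Proof.
have le_ab : a + b <= n.+1 by exact: S_add_b.
move Ek : (p + q) => k; elim: k p q Ek x => [|k IH] p q Ek x le_xn le_yn E.
  have p0 : p = 0 by lia.
  have q0 : q = 0 by lia.
  move: E; rewrite p0 q0 !mul0n !addn0 => ->; exact: walk_nil.
have [/andP [q_gt0 le_bx]|/nandP no_down] := boolP ((0 < q) && (b <= x)).
  apply: (walk_consT bT); first by rewrite le_bx.
  apply: (IH p q.-1); [lia | lia | done |].
  move: E; rewrite -{1}(prednK q_gt0) mulSn; lia.
have le_xa : x + a <= n.
  case: p Ek E => [|p] Ek; rewrite ?mulSn; case: no_down; lia.
case: p Ek E => [|p] Ek E; first by case: no_down; lia.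
apply: (walk_consS aS le_xa).
by apply: (IH p q); [lia | lia | done | move: E; rewrite mulSn; lia].
Qed.

Lemma walk_ab_long m x y :
  x <= n -> y <= n -> n < m -> a + b %| y + m * b - x -> walk m x y.
Proof.
move=> le_xn le_yn lt_nm /dvdnP [p Ep].
have le_mma : m <= m * a by rewrite leq_pmulr.
have le_mmb : m <= m * b by rewrite leq_pmulr.
have le_pm : p <= m.
  by rewrite -(leq_pmul2r (_ : 0 < a + b)) ?mulnDr; lia.
rewrite -(subnKC le_pm); apply: walk_ab => //.
have : p * b <= m * b by rewrite leq_mul2r le_pm orbT.
by move: Ep; rewrite mulnBl !mulnDr; lia.
Qed.

Definition steps : seq int :=
  [seq Posz (nat_of_ord s) | s <- enum S] ++ [seq (- Posz (nat_of_ord t))%R | t <- enum T].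

Lemma walk_steps (L : seq int) x : {subset L <= steps} -> x <= n ->
  exists al be y, [/\ al <= n.+1 * size L, be <= n.+1 * size L, y <= n,
    walk (size L + al + be) x y &
    ((y + be * b)%N%:Z = (x + al * a)%N%:Z + \sum_(z <- L) z)%R].
Proof.
elim: L x => [|z L IH] x sub_zL le_xn.
  exists 0, 0, x; split=> //; first exact: walk_nil.
  by rewrite big_nil !mul0n !addn0 addr0.
have sub_L : {subset L <= steps} by move=> z' z'L; apply: sub_zL; rewrite in_cons z'L orbT.
have -> : size (z :: L) = (size L).+1 by [].
have /sub_zL := mem_head z L; rewrite mem_cat => /orP [] /mapP [u]; rewrite mem_enum.
- (* descend by -b steps to x %% b < b, then take the step +u *)
  move=> uS ->; have le_ub := S_add_b uS.
  have lt_xb : x %% b < b by rewrite ltn_pmod.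
  have [al [be [y [le_al le_be le_yn w E]]]] := IH (x %% b + u) sub_L ltac:(lia).
  have w1 : walk (0 + x %/ b) x (x %% b).
    by apply: walk_ab; rewrite ?mul0n ?addn0 -?divn_eq //; lia.
  have le_xdb : x %/ b <= n by rewrite (leq_trans (leq_div _ _)).
  exists al, (x %/ b + be), y; split => //.
  + by rewrite mulnS; lia.
  + by rewrite mulnS; lia.
  + have le_un : x %% b + u <= n by lia.
    suff -> : (size L).+1 + al + (x %/ b + be) = 0 + x %/ b + (size L + al + be).+1.
      exact: walk_cat w1 (walk_consS uS le_un w).
    lia.
  + move: E (divn_eq x b); rewrite big_cons mulnDl; set X := (\sum_(_ <- _) _)%R; lia.
- (* climb by +a steps as high as possible, then take the step -u *)
  move=> uT ->; have le_au := a_add_T uT.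
  set k := (n - x) %/ a.
  have le_ka : k * a <= n - x by apply: leq_divM.
  have lt_ka : n - x < k.+1 * a by apply: ltn_ceil.
  have le_k : k <= n by rewrite (leq_trans (leq_div _ _)) ?leq_subr.
  have le_u : u <= x + k * a by move: lt_ka; rewrite mulSn; lia.
  have [al [be [y [le_al le_be le_yn w E]]]] := IH (x + k * a - u) sub_L ltac:(lia).
  have w1 : walk (k + 0) x (x + k * a) by apply: walk_ab; rewrite ?mul0n ?addn0 //; lia.
  exists (k + al), be, y; split => //.
  + by rewrite mulnS; lia.
  + by rewrite mulnS; lia.
  + have le_u_ka : u <= x + k * a <= n by lia.
    suff -> : (size L).+1 + (k + al) + be = k + 0 + (size L + al + be).+1.
      exact: walk_cat w1 (walk_consT uT le_u_ka w).
    lia.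
  + move: E; rewrite big_cons !mulnDl; set X := (\sum_(_ <- _) _)%R; lia.
Qed.

Lemma gcd_steps_dvd (N : int) :
  (\big[gcdz/N]_(z <- steps) (z + Posz b)%R %| (gcd_sum S T)%:Z)%Z.
Proof.
set h := \big[gcdz/N]_(z <- steps) _.
have h_dvd z : z \in steps -> (h %| (z + Posz b)%R)%Z.
  exact: dvdz_big_gcdz (fun z => z + Posz b)%R N steps z.
rewrite dvdzE /=; apply/dvdn_biggcdP => s sS; apply/dvdn_biggcdP => t tT.
have sS' : Posz s \in steps.
  by rewrite mem_cat (map_f (fun s : 'I_n.+1 => Posz s)) ?mem_enum.
have tT' : (- Posz t)%R \in steps.
  by rewrite mem_cat (map_f (fun t : 'I_n.+1 => - Posz t)%R) ?mem_enum ?orbT.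
have := rpredB (h_dvd _ sS') (h_dvd _ tT').
by rewrite (_ : (_ - _)%R = Posz (s + t)) ?dvdzE //; lia.
Qed.

Lemma walk_of_mod : exists M, forall m x y, M <= m -> x <= n -> y <= n ->
  x + m * a == y %[mod gcd_sum S T] -> walk m x y.
Proof.
set N := a + b; set K := N * size steps.
(* room for a Bezout prefix of at most K steps, its detours, and then more than n steps *)
exists (K + 2 * (n.+1 * K) + n.+1) => m x y le_Mm le_xn le_yn.
rewrite eqn_mod_dvdz => dvd_d.
have N_gt0 : 0 < N by rewrite addn_gt0 a_gt0.
set R := (Posz y + Posz (m * b) - Posz x)%R.
have dvd_R : ((gcd_sum S T)%:Z %| R)%Z.
  have -> : R = (Posz y - Posz (x + m * a) + Posz (m * N))%R by rewrite mulnDr; lia.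
  by rewrite rpredD // dvdzE dvdn_mull // dvdn_gcd_sum.
have [L [sub_L le_L dvd_L]] : exists L : seq int, [/\ {subset L <= steps}, size L <= K &
    (N%:Z %| (\sum_(z <- L) (z + Posz b) - R)%R)%Z].
  exact: bezout_mod_seq N_gt0 (dvdz_trans (gcd_steps_dvd _) dvd_R).
have [al [be [y1 [le_al le_be le_y1 w1 E1]]]] := walk_steps sub_L le_xn.
have le_LK : n.+1 * size L <= n.+1 * K by rewrite leq_mul2l le_L orbT.
clearbody K.
have [m' Em] : exists m', m = size L + al + be + m'.
  by exists (m - (size L + al + be)); lia.
suff w2 : walk m' y1 y by rewrite Em; exact: walk_cat w1 w2.
have lt_nm' : n < m' by lia.
apply: walk_ab_long => //.
have le_mb : m' <= m' * b by rewrite leq_pmulr.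
suff : (N%:Z %| Posz (y + m' * b - y1))%Z by [].
have sumE : (\sum_(z <- L) (z + Posz b) = \sum_(z <- L) z + Posz (size L * b))%R.
  by rewrite big_split /= big_const_seq count_predT iter_addr_0; congr (_ + _)%R; lia.
have -> : Posz (y + m' * b - y1) =
          (- (\sum_(z <- L) (z + Posz b) - R) - Posz (al * N))%R.
  move: E1; rewrite sumE /R /N Em !mulnDl mulnDr.
  by set X := (\sum_(_ <- _) _)%R; lia.
by rewrite rpredB ?rpredN // dvdzE dvdn_mull.
Qed.

Lemma bpow_toeplitz_eventually : exists M, forall m, M <= m -> forall i j : 'I_n.+1,
  bpow (toeplitz S T) m i j = (i + m * a == j %[mod gcd_sum S T]).
Proof.
have [M walk_mod] := walk_of_mod.
exists M => m le_Mm i j; apply/idP/idP; first exact: bpow_toeplitz_mod aS bT.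
by move/(walk_mod m i j le_Mm (ltn_ord i) (ltn_ord j)); rewrite /walk !inord_val.
Qed.

End Walks.

Lemma dvdn_mul_divgcd d a p : 0 < a -> (d %| p * a) = (d %/ gcdn d a %| p).
Proof.
move=> a_gt0; rewrite -[RHS](dvdn_pmul2r a_gt0) divn_mulAC ?dvdn_gcdl //.
by rewrite -/(lcmn d a) dvdn_lcm (dvdn_mull _ (dvdnn a)) andbT.
Qed.

Lemma is_matrix_period_mod n (A : 'M[bool]_n.+1) d a M : 0 < d -> 0 < a ->
  (forall m, M <= m -> forall i j : 'I_n.+1, bpow A m i j = (i + m * a == j %[mod d])) ->
  is_matrix_period A (d %/ gcdn d a).
Proof.
move=> d_gt0 a_gt0 bpow_mod.
have le_M_add m p : M <= m -> M <= m + p by move=> le_Mm; rewrite (leq_trans le_Mm) ?leq_addr.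
split; first by rewrite divn_gt0 ?gcdn_gt0 ?d_gt0 // dvdn_leq ?dvdn_gcdl.
split.
  exists M => m le_Mm; apply/matrixP => i j; rewrite !bpow_mod ?le_M_add //.
  have /eqP dvd_pa : d %| d %/ gcdn d a * a by rewrite dvdn_mul_divgcd.
  by rewrite mulnDl addnA -[in RHS]modnDmr dvd_pa addn0.
move=> p p_gt0 [M' periodic]; set m := (M + M') * d.
have le_Mm : M <= m by rewrite /m; nia.
have le_M'm : M' <= m by rewrite /m; nia.
have := congr1 (fun B : 'M_n.+1 => B ord0 ord0) (periodic m le_M'm).
rewrite /= !bpow_mod ?le_M_add //.
rewrite !add0n !mod0n -/(d %| m * a) -/(d %| (m + p) * a).
have dvd_ma : d %| m * a by rewrite /m mulnAC dvdn_mull.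
rewrite dvd_ma mulnDl dvdn_addr // dvdn_mul_divgcd // => /esym dvd_p.
exact: dvdn_leq.
Qed.

Lemma compm_mod n (A : 'M[bool]_n.+1) d a b Ma Mb :
  0 < d -> d <= n.+1 -> d %| a + b ->
  (forall m, Ma <= m -> forall i j : 'I_n.+1, bpow A m i j = (i + m * a == j %[mod d])) ->
  (forall m, Mb <= m -> forall i j : 'I_n.+1, bpow A^T%R m i j = (i + m * b == j %[mod d])) ->
  forall m, Ma + Mb <= m -> compm A m = (\matrix_(i, j) (i == j %[mod d]))%R.
Proof.
move=> d_gt0 le_dn dvd_ab powA powAT m le_Mm; apply/matrixP => i j; rewrite !mxE.
have {le_Mm}[le_Ma le_Mb] : Ma <= m /\ Mb <= m by lia.
have /eqP dvd_mab : d %| m * (a + b) by rewrite dvdn_mull.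
apply/existsP/eqP => [[k /andP []]|eq_ij].
  rewrite powA // powAT // => /eqP ik /eqP kj.
  by rewrite -kj -modnDml -ik modnDml -addnA -mulnDr -modnDmr dvd_mab addn0.
have lt_kn : (i + m * a) %% d < n.+1 by rewrite (leq_trans _ le_dn) ?ltn_pmod.
exists (inord ((i + m * a) %% d)); rewrite powA // powAT // inordK //.
by rewrite modn_mod eqxx modnDml -addnA -mulnDr -modnDmr dvd_mab addn0 eq_ij /=.
Qed.

Lemma is_competition_period_const n (A C : 'M[bool]_n) M :
  (forall m, M <= m -> compm A m = C) -> is_competition_period A 1.
Proof.
move=> compmC.
pose P q := (0 < q) && [forall k : 'I_M.+1, (q <= k) ==> (compm A k == C)].
have PE q : P q -> forall k, q <= k -> compm A k = C.
  case/andP => _ /forallP PC k le_qk; have [le_kM|/ltnW] := leqP k M; last exact: compmC.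
  by have := PC (inord k); rewrite inordK // le_qk => /eqP.
have cip_const q : comp_index_prop A q -> forall k, q <= k -> compm A k = C.
  case=> r r_gt0 per k le_qk.
  have per_k t : compm A k = compm A (k + t * r).
    elim: t => [|t ->]; first by rewrite addn0.
    have := per (k - q + t * r).
    rewrite (_ : q + _ = k + t * r); last by lia.
    by rewrite (_ : q + r + _ = k + t.+1 * r) // mulSn; lia.
  by rewrite (per_k M) compmC //; nia.
have [|q Pq q_min] := ex_minnP (_ : exists q, P q).
  by exists M.+1; apply/andP; split => //; apply/forallP => k; rewrite leqNgt ltn_ord.
have q_gt0 : 0 < q by case/andP: Pq.
exists q; split; last by split=> //; rewrite !(PE q Pq) ?leq_addr.
split=> //; split.
  by exists 1 => // i; rewrite !(PE q Pq) //; lia.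
move=> q' q'_gt0 /cip_const q'_const; apply: q_min; rewrite /P q'_gt0.
by apply/forallP => k; apply/implyP => le_q'k; rewrite q'_const.
Qed.

Lemma class_sizesE N d :
  class_sizes N d = [seq count (fun u => u %% d == k) (iota 0 N) | k <- iota 0 d].
Proof.
rewrite /class_sizes [iota 1 d](iotaDl 1 0) -map_comp; apply/eq_in_map => k.
rewrite mem_iota add0n /= => lt_kd.
rewrite (iotaDl 1 0) count_map; apply: eq_count => u /=.
by rewrite eqn_modDl (modn_small lt_kd).
Qed.

Lemma sumn_class_sizes N d : 0 < d -> sumn (class_sizes N d) = N.
Proof.
move=> d_gt0; rewrite class_sizesE sumnE big_map.
elim: N => [|N IH]; first by rewrite big1_seq.
rewrite -addn1 iotaD add0n.
under eq_bigr => k _ do rewrite count_cat /= addn0.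
rewrite big_split IH /= -big_mkcond sum1_count.
rewrite (eq_count (a2 := pred1 (N %% d))) => [|k]; last by rewrite /= eq_sym.
by rewrite count_uniq_mem ?iota_uniq // mem_iota ltn_pmod.
Qed.

Lemma quotient_lt_count_residue N d u : 0 < d -> u < N ->
  u %/ d < count (fun v => v %% d == u %% d) (iota 0 N).
Proof.
move=> d_gt0 lt_uN.
pose s := [seq u %% d + t * d | t <- iota 0 (u %/ d).+1].
have -> : (u %/ d).+1 = size s by rewrite size_map size_iota.
rewrite -size_filter uniq_leq_size //.
  rewrite map_inj_uniq ?iota_uniq // => t t' /addnI /eqP.
  by rewrite eqn_pmul2r // => /eqP.
move=> v /mapP [t]; rewrite mem_iota => /andP [_ le_t] ->.
rewrite mem_filter addnC modnMDl modn_mod eqxx mem_iota /=.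
have : t * d <= u %/ d * d by rewrite leq_mul2r (_ : t <= u %/ d) ?orbT //; lia.
by have := divn_eq u d; lia.
Qed.

Lemma flatten_index_block sh k c k' : c < nth 0 sh k ->
  (sumn (take k' sh) <= flatten_index sh k c < sumn (take k' sh) + nth 0 sh k')
  = (k' == k).
Proof.
move=> lt_c; apply/idP/eqP => [/andP [lo hi]|->]; last first.
  by rewrite /flatten_index leq_addr ltn_add2l.
set p := flatten_index sh k c.
have off : p - sumn (take k' sh) < nth 0 sh k' by rewrite ltn_subLR.
have Ep : flatten_index sh k' (p - sumn (take k' sh)) = p by rewrite /flatten_index subnKC.
by rewrite -(flatten_indexKl lt_c) -/p -Ep flatten_indexKl.
Qed.

(* The permutation lists each residue class mod d in increasing order, the classes one after another. *)
Lemma blockdiag_class_sizes N d : 0 < d ->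
  exists s : 'S_N, forall i j,
    blockdiag_ones N (class_sizes N d) i j = (s i == s j %[mod d]).
Proof.
move=> d_gt0; set sh := class_sizes N d.
pose tau u := flatten_index sh (u %% d) (u %/ d).
have lt_nth (u : 'I_N) : u %/ d < nth 0 sh (u %% d).
  rewrite /sh class_sizesE (nth_map 0) ?size_iota ?ltn_pmod // nth_iota ?ltn_pmod //.
  exact: quotient_lt_count_residue.
have tau_lt (u : 'I_N) : tau u < N.
  by rewrite -{2}(sumn_class_sizes N d_gt0) flatten_indexP.
pose f u := Ordinal (tau_lt u).
have f_inj : injective f.
  move=> u v /(congr1 val) /= Etau; apply: val_inj => /=.
  have Emod : u %% d = v %% d.
    by rewrite -(flatten_indexKl (lt_nth u)) -/(tau u) Etau flatten_indexKl.
  have Ediv : u %/ d = v %/ d.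
    by rewrite -(flatten_indexKr (lt_nth u)) -/(tau u) Etau flatten_indexKr.
  by rewrite (divn_eq u d) (divn_eq v d) Ediv Emod.
exists (perm f_inj)^-1%g => i j.
have [u ->] : exists u, i = perm f_inj u by exists ((perm f_inj)^-1%g i); rewrite permKV.
have [v ->] : exists v, j = perm f_inj v by exists ((perm f_inj)^-1%g j); rewrite permKV.
rewrite !permK !permE mxE size_map size_iota /=.
apply/hasP/eqP => [[k _ /andP []]|Euv].
  by rewrite !flatten_index_block ?lt_nth // => /eqP -> /eqP ->.
exists (u %% d); first by rewrite mem_iota ltn_pmod.
by rewrite !flatten_index_block ?lt_nth // Euv eqxx.
Qed.

Lemma bigminn_mem (I : finType) (P : pred I) (F : I -> nat) x :
  (exists i, P i) -> (forall i, P i -> F i <= x) ->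
  exists2 i, P i & \big[minn/x]_(j | P j) F j = F i.
Proof.
move=> [i0 Pi0] le_Fx; rewrite -minEnat (bigmin_eq_arg _ i0) //.
by case: arg_minP => // i Pi _; exists i.
Qed.

Theorem corollary2p4 (n : nat) (S T : {set 'I_n}) :
  2 <= n ->
  S != set0 -> T != set0 ->
  (forall s, s \in S -> 0 < val s) -> (forall t, t \in T -> 0 < val t) ->
  (\max_(s in S) val s) + \big[minn/n]_(t in T) val t <= n ->
  \big[minn/n]_(s in S) val s + (\max_(t in T) val t) <= n ->
  let A := toeplitz S T in
  let d := \big[gcdn/0]_(s in S) \big[gcdn/0]_(t in T) (val s + val t) in
  let d' := gcdn d (\big[minn/n]_(s in S) val s) in
  [/\ is_matrix_period A (d %/ d'),
      is_competition_period A 1 &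
      exists P : 'S_n, exists M, forall m, M <= m ->
        bmul (bperm_mx P) (bmul (compm A m) (bperm_mx P)^T)
        = blockdiag_ones n (class_sizes n d)].
Proof.
case: n S T => [//|n] S T _ /set0Pn S0 /set0Pn T0 S_gt0 T_gt0 le_maxS_minT le_minS_maxT A d d'.
have [a aS Ea] := bigminn_mem S0 (fun u _ => ltnW (ltn_ord u)).
have [b bT Eb] := bigminn_mem T0 (fun u _ => ltnW (ltn_ord u)).
have S_add_b s : s \in S -> s + b <= n.+1.
  by move=> sS; rewrite -Eb (leq_trans _ le_maxS_minT) // leq_add2r leq_bigmax_cond.
have a_add_T t : t \in T -> a + t <= n.+1.
  by move=> tT; rewrite -Ea (leq_trans _ le_minS_maxT) // leq_add2l leq_bigmax_cond.
have [a_gt0 b_gt0] := (S_gt0 a aS, T_gt0 b bT).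
have [M1 powA] := bpow_toeplitz_eventually aS bT a_gt0 b_gt0 S_add_b a_add_T.
have T_add_a t : t \in T -> t + a <= n.+1 by move=> tT; rewrite addnC a_add_T.
have b_add_S s : s \in S -> b + s <= n.+1 by move=> sS; rewrite addnC S_add_b.
have [M2 powAT] := bpow_toeplitz_eventually bT aS b_gt0 a_gt0 T_add_a b_add_S.
rewrite -gcd_sumC -trmx_toeplitz in powAT.
have dvd_ab : d %| a + b by exact: dvdn_gcd_sum.
have d_gt0 : 0 < d by rewrite (dvdn_gt0 _ dvd_ab) ?addn_gt0 ?a_gt0.
have le_dn : d <= n.+1 by rewrite (leq_trans (dvdn_leq _ dvd_ab)) ?addn_gt0 ?a_gt0 ?S_add_b.
have compmE := compm_mod d_gt0 le_dn dvd_ab powA powAT.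
split.
- by rewrite /d' Ea; exact: is_matrix_period_mod d_gt0 a_gt0 powA.
- exact: is_competition_period_const compmE.
have [s blockE] := blockdiag_class_sizes n.+1 d_gt0.
exists s, (M1 + M2) => m le_Mm; apply/matrixP => i j.
by rewrite bmul_bperm_mx compmE // blockE mxE.
Qed.
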